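(* Let $\mathcal{F}=(I,\mathcal{A}=(A_i)_{i\in I},R,i_0,(\Delta_i,\delta_i)_{i\neq i_0})$ be an interactive family, with $A_i=(\tau_i:(\alpha_i:\mathbf{C}_i\rightharpoondown\mathbf{P}^{L_i})\looparrowright\mathbf{h}_i)$. Let $\mathbf{B}=\mathbf{C}_{i_0}$ and $M=\mathrm{Im}(rb(R))$. Define a graphical multi-dynamics $\beta$ with motor the underlying graph of $\mathbf{B}$ and parameter set $M$ by: for every object $S$ of $\mathbf{B}$, $$S^\beta=\Big\{(a_i)_{i\in I}\in S^{\alpha_{i_0}}\times\prod_{i\neq i_0}(\Delta_iS)^{\alpha_i}\ :\ \forall i\neq i_0,\ \tau_i(a_i)=\delta_i(\tau_{i_0}(a_{i_0}))\Big\},$$ and for every arrow $e:S\to T$ of $\mathbf{B}$, every $a=(a_i)_{i\in I}\in S^\beta$ and every $\mu\in M$, $e^\beta_\mu(a)$ is the set of $b=(b_i)_{i\in I}\in T^\beta$ such that (1) $\tau_{i_0}(b_{i_0})=e^{\mathbf{h}_{i_0}}(\tau_{i_0}(a_{i_0}))$, and (2) there exists $(\mathfrak{a}_i)_{i\in I}\in rb(R)^{-1}(\mu)$ such that for every $i\in I$, $\mathfrak{a}_i\rhd a_i$ and $\mathfrak{a}_i\rhd b_i$. Then $\beta$ is a sub-functorial multi-dynamics $\mathbf{C}_{i_0}\rightharpoondown\mathbf{P}^M$.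
   Context: Transitions: a transition $f:A\rightsquigarrow B$ is a map $A\to\mathcal{P}(B)$; $(g\odot f)(a)=\bigcup_{b\in f(a)}g(b)$; $u\subset v$ means pointwise inclusion; $\mathrm{Id}_A(a)=\{a\}$. Sub-functorial multi-dynamics $\alpha:\mathbf{C}\rightharpoondown\mathbf{P}^L$ ($\mathbf{C}$ small category, $L$ nonempty set): sets $S^\alpha$ for objects $S$, pairwise disjoint, and for each arrow $f:S\to T$ transitions $f^\alpha_\lambda:S^\alpha\rightsquigarrow T^\alpha$ ($\lambda\in L$) with $(\mathrm{Id}_S)^\alpha_\lambda\subset\mathrm{Id}_{S^\alpha}$ and $(g\circ f)^\alpha_\lambda\subset g^\alpha_\lambda\odot f^\alpha_\lambda$. A graphical multi-dynamics is the same data without these two conditions. $st(\alpha)=\bigcup_S S^\alpha$. Clock: a functor $\mathbf{h}:\mathbf{C}\to\mathbf{Sets}$ with $S^{\mathbf{h}}=\mathbf{h}(S)$ pairwise disjoint for distinct objects; its elements (instants) $st(\mathbf{h})=\bigcup_S S^{\mathbf h}$ are preordered by $s\le_{\mathbf h}t$ iff $t=e^{\mathbf h}(s)$ for some arrow $e$. Open sub-functorial dynamics $A=(\tau:(\alpha:\mathbf{C}\rightharpoondown\mathbf{P}^L)\looparrowright\mathbf{h})$: a sub-functorial multi-dynamics $\alpha$, a clock $\mathbf{h}$ on the same $\mathbf{C}$, and a map $\tau:st(\alpha)\to st(\mathbf{h})$ with $\tau(S^\alpha)\subset S^{\mathbf h}$ and, for every arrow $e:S\to T$, $\lambda\in L$,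 $a\in S^\alpha$ and $b\in e^\alpha_\lambda(a)$, $\tau(b)=e^{\mathbf h}(\tau(a))$. Realization of $A$: a pair $(\lambda,\mathfrak{a})$ with $\lambda\in L$ and $\mathfrak{a}$ a partial function from $st(\mathbf h)$ to $st(\alpha)$ with domain $D_{\mathfrak a}$ such that $\tau(\mathfrak a(t))=t$ for $t\in D_{\mathfrak a}$; $\mathfrak a(t)\in S^\alpha$ whenever $t\in S^{\mathbf h}\cap D_{\mathfrak a}$; and for every arrow $f:S\to T$ and $t\in S^{\mathbf h}$, if $f^{\mathbf h}(t)\in D_{\mathfrak a}$ then $t\in D_{\mathfrak a}$ and $\mathfrak a(f^{\mathbf h}(t))\in f^\alpha_\lambda(\mathfrak a(t))$. $\mathfrak a$ is the external part; $\mathcal{S}^*_{(A,\lambda)}$ denotes the set of nonempty external parts of realizations with parameter $\lambda$, and $\mathcal{S}^*_A=\bigcup_\lambda\mathcal{S}^*_{(A,\lambda)}$. $A$ is efficient if $\mathcal{S}^*_A\neq\emptyset$. $\mathfrak a\rhd a$ (''passes through the state $a$'') means $\tau(a)\in D_{\mathfrak a}$ and $\mathfrak a(\tau(a))=a$. Interaction: for a family $\mathcal{A}=(A_i)_{i\in I}$ ($I\neq\emptyset$) of efficient open sub-functorial dynamics with parameter sets $L_i$ and $\mathcal{S}^*_i=\mathcal{S}^*_{A_i}$, a configuration is a family $((\sigma_i,\lambda_i))_{i\in I}$ with $\lambda_i\in L_i$ and $\sigma_i\in\mathcal{S}^*_{(A_i,\lambda_i)}$ for all $i$. An interaction $R$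 is a nonempty set of configurations. $rb(R)$ is the binary relation from $\prod_i\mathcal{S}^*_i$ to $\prod_iL_i$ relating $(\sigma_i)_i$ to $(\lambda_i)_i$ iff $((\sigma_i,\lambda_i))_i\in R$; $\mathrm{Im}(rb(R))$ is the set of $(\lambda_i)_i$ so related to some $(\sigma_i)_i$, and $rb(R)^{-1}(\mu)$ is the set of $(\sigma_i)_i$ related to $\mu$. Synchronization of $A_1$ by $A_0$ (written $(\Delta_1,\delta_1):\mathbf h_0\Rsh\mathbf h_1$): a map $\Delta_1$ from objects of $\mathbf{C}_0$ to objects of $\mathbf{C}_1$ and a map $\delta_1:st(\mathbf h_0)\to st(\mathbf h_1)$ with $\delta_1(S^{\mathbf h_0})\subset(\Delta_1S)^{\mathbf h_1}$ for every object $S$, and $\delta_1$ monotone (either $s\le_{\mathbf h_0}t\Rightarrow\delta_1(s)\le_{\mathbf h_1}\delta_1(t)$ for all $s,t$, or $s\le_{\mathbf h_0}t\Rightarrow\delta_1(t)\le_{\mathbf h_1}\delta_1(s)$ for all $s,t$). Interactive family $(I,\mathcal A,R,i_0,(\Delta_i,\delta_i)_{i\neq i_0})$: nonempty set $I$, family $\mathcal A=(A_i)_{i\in I}$ of efficient open sub-functorial dynamics, an interaction $R$ for $\mathcal A$, an index $i_0\in I$, and synchronizations $(\Delta_i,\delta_i):\mathbf h_{i_0}\Rsh\mathbf h_i$ for $i\neq i_0$. *)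

From Stdlib Require Import Logic.FunctionalExtensionality.

Record Cat : Type := {
  Ob : Type;
  Hom : Ob -> Ob -> Type;
  cid : forall S, Hom S S;
  ccomp : forall S T U, Hom T U -> Hom S T -> Hom S U;
  ccomp_id_l : forall S T (f : Hom S T), ccomp S T T (cid T) f = f;
  ccomp_id_r : forall S T (f : Hom S T), ccomp S S T f (cid S) = f;
  ccomp_assoc : forall S T U V (f : Hom S T) (g : Hom T U) (h : Hom U V),
      ccomp S U V h (ccomp S T U g f) = ccomp S T V (ccomp T U V h g) f
}.
Arguments Hom {c}.
Arguments cid {c}.
Arguments ccomp {c S T U}.

(* ---------- Transitions  A ~> B  (a map A -> P(B)); "f a b" means b ∈ f(a) ---------- *)
Definition Transition (A B : Type) := A -> B -> Prop.
Definition Tcomp {A B C : Type} (g : Transition B C) (f : Transition A B) : Transition A C :=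
  fun a c => exists b, f a b /\ g b c.
Definition Tsub {A B : Type} (u v : Transition A B) : Prop :=
  forall a b, u a b -> v a b.
Definition TId (A : Type) : Transition A A := fun a b => a = b.

(* ---------- (Sub-functorial) multi-dynamics ----------
   The state sets S^alpha are given as a family of types indexed by objects
   (so they are automatically pairwise disjoint; st(alpha) = {S & St S}).
   A graphical multi-dynamics is just the data (St, tr). *)
Definition SubFunctorial (C : Cat) (L : Type) (St : Ob C -> Type)
  (tr : forall S T : Ob C, Hom S T -> L -> Transition (St S) (St T)) : Prop :=
  inhabited L /\
  (forall S (l : L), Tsub (tr S S (cid S) l) (TId (St S))) /\
  (forall S T U (f : Hom S T) (g : Hom T U) (l : L),
      Tsub (tr S U (ccomp g f) l) (Tcomp (tr T U g l) (tr S T f l))).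

Record Clock (C : Cat) : Type := {
  hob : Ob C -> Type;
  hmap : forall S T : Ob C, Hom S T -> hob S -> hob T;
  hmap_id : forall S (t : hob S), hmap S S (cid S) t = t;
  hmap_comp : forall S T U (f : Hom S T) (g : Hom T U) (t : hob S),
      hmap S U (ccomp g f) t = hmap T U g (hmap S T f t)
}.
Arguments hob {C}.
Arguments hmap {C} c {S T}.

Definition instants {C : Cat} (h : Clock C) := {S : Ob C & hob h S}.
Definition hle {C : Cat} (h : Clock C) (s t : instants h) : Prop :=
  exists e : Hom (projT1 s) (projT1 t), hmap h e (projT2 s) = projT2 t.

Record OpenDyn : Type := {
  dC : Cat;
  dL : Type;
  dSt : Ob dC -> Type;
  dtr : forall S T : Ob dC, Hom S T -> dL -> Transition (dSt S) (dSt T);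
  dsub : SubFunctorial dC dL dSt dtr;
  dh : Clock dC;
  dtau : forall S : Ob dC, dSt S -> hob dh S;
  dtau_tr : forall S T (e : Hom S T) (l : dL) (a : dSt S) (b : dSt T),
      dtr S T e l a b -> dtau T b = hmap dh e (dtau S a)
}.

(* External parts: partial maps st(h) -> st(alpha) sending S^h into S^alpha
   (domain D = where the value is Some). *)
Definition Ext (A : OpenDyn) := forall S : Ob (dC A), hob (dh A) S -> option (dSt A S).

Definition IsRealization (A : OpenDyn) (l : dL A) (x : Ext A) : Prop :=
  (forall S t a, x S t = Some a -> dtau A S a = t) /\
  (forall (S T : Ob (dC A)) (f : Hom S T) (t : hob (dh A) S) (b : dSt A T),
      x T (hmap (dh A) f t) = Some b ->
      exists a, x S t = Some a /\ dtr A S T f l a b).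

Definition NonemptyExt (A : OpenDyn) (x : Ext A) : Prop :=
  exists S t a, x S t = Some a.

Definition Sstar (A : OpenDyn) (l : dL A) (x : Ext A) : Prop :=
  IsRealization A l x /\ NonemptyExt A x.

Definition Efficient (A : OpenDyn) : Prop := exists l x, Sstar A l x.

Definition Passes (A : OpenDyn) (x : Ext A) (S : Ob (dC A)) (a : dSt A S) : Prop :=
  x S (dtau A S a) = Some a.

(* ---------- Interactions ----------
   A configuration ((sigma_i, lambda_i))_i is represented by the pair of families
   (sigma, lambda); R is a nonempty set of configurations. *)
Record Interaction (I : Type) (A : I -> OpenDyn) : Type := {
  conf : (forall i, Ext (A i)) -> (forall i, dL (A i)) -> Prop;
  conf_ok : forall sg lm, conf sg lm -> forall i, Sstar (A i) (lm i) (sg i);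
  conf_ne : exists sg lm, conf sg lm
}.
Arguments Interaction {I}.
Arguments conf {I A} _ _ _.

Definition rb {I : Type} {A : I -> OpenDyn} (R : Interaction A) := conf R.

Record Sync (A0 A1 : OpenDyn) : Type := {
  sD : Ob (dC A0) -> Ob (dC A1);
  sd : forall S, hob (dh A0) S -> hob (dh A1) (sD S);
  smono :
    (forall s t : instants (dh A0), hle (dh A0) s t ->
       hle (dh A1) (existT _ (sD (projT1 s)) (sd _ (projT2 s)))
                   (existT _ (sD (projT1 t)) (sd _ (projT2 t)))) \/
    (forall s t : instants (dh A0), hle (dh A0) s t ->
       hle (dh A1) (existT _ (sD (projT1 t)) (sd _ (projT2 t)))
                   (existT _ (sD (projT1 s)) (sd _ (projT2 s))))
}.
Arguments sD {A0 A1}.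
Arguments sd {A0 A1} s {S}.

Section Beta.
Context {I : Type} {A : I -> OpenDyn} (R : Interaction A) (i0 : I)
        (sy : forall j : {i : I | i <> i0}, Sync (A i0) (A (proj1_sig j))).

Definition BetaPar : Type := {mu : forall i, dL (A i) | exists sg, rb R sg mu}.

(* S^beta : families (a_i)_{i in I}, split as a_{i0} and (a_i)_{i <> i0} *)
Definition BetaSt (S : Ob (dC (A i0))) : Type :=
  { a : dSt (A i0) S * (forall j : {i : I | i <> i0}, dSt (A (proj1_sig j)) (sD (sy j) S))
  | forall j, dtau (A (proj1_sig j)) _ (snd a j) = sd (sy j) (dtau (A i0) S (fst a)) }.

Definition BetaTr (S T : Ob (dC (A i0))) (e : Hom S T) (mu : BetaPar) :
  Transition (BetaSt S) (BetaSt T) :=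
  fun a b =>
    dtau (A i0) T (fst (proj1_sig b)) = hmap (dh (A i0)) e (dtau (A i0) S (fst (proj1_sig a))) /\
    exists sg : forall i, Ext (A i),
      rb R sg (proj1_sig mu) /\
      Passes (A i0) (sg i0) S (fst (proj1_sig a)) /\
      Passes (A i0) (sg i0) T (fst (proj1_sig b)) /\
      (forall j : {i : I | i <> i0},
         Passes (A (proj1_sig j)) (sg (proj1_sig j)) _ (snd (proj1_sig a) j) /\
         Passes (A (proj1_sig j)) (sg (proj1_sig j)) _ (snd (proj1_sig b) j)).
End Beta.

(** Identity: a state of [beta] reached from [a] along an identity arrow lies
    at the same instant of every clock as [a], and a realization passes
    through at most one state per instant, so it is [a] itself.
    Composition: given [c] reached from [a] along [g o f], take the instant
    [t] obtained from [a] along [f].  Domains of realizations are closed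
    downwards for the clock preorder, so the realization of [A i0] is defined
    at [t]; as each synchronization is monotone, [delta_i t] lies below
    [delta_i] of the instant of [a] or of [c], so the realization of [A i] is
    defined there too.  Their values at these instants form the intermediate
    state of [beta]. *)

From Stdlib Require Import ProofIrrelevance FunctionalExtensionality ClassicalEpsilon.

Definition defined_at {A : OpenDyn} (x : Ext A) (s : instants (dh A)) : Prop :=
  exists a, x (projT1 s) (projT2 s) = Some a.

Lemma passes_tau_inj (A : OpenDyn) (x : Ext A) S (a b : dSt A S) :
  Passes A x S a -> Passes A x S b -> dtau A S a = dtau A S b -> a = b.
Proof.
  unfold Passes; intros Ha Hb Hab.
  rewrite Hab in Ha; congruence.
Qed.

Section Realization.
Variables (A : OpenDyn) (l : dL A) (x : Ext A).
Hypothesis Hx : IsRealization A l x.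

Lemma realization_passes S t a : x S t = Some a -> Passes A x S a.
Proof.
  intro Ht; unfold Passes.
  rewrite (proj1 Hx _ _ _ Ht); exact Ht.
Qed.

Lemma realization_defined_le (s t : instants (dh A)) :
  hle (dh A) s t -> defined_at x t -> defined_at x s.
Proof.
  destruct s as [S s], t as [T t]; intros [e He] [b Hb]; simpl in *.
  subst t.
  destruct (proj2 Hx _ _ e s b Hb) as [a [Ha _]].
  exists a; exact Ha.
Qed.

End Realization.

Definition sync_instant {A0 A1 : OpenDyn} (sy : Sync A0 A1)
  (s : instants (dh A0)) : instants (dh A1) :=
  existT _ (sD sy (projT1 s)) (sd sy (projT2 s)).

Lemma sync_realization_defined_between (A0 A1 : OpenDyn) (sy : Sync A0 A1)
  (l : dL A1) (x : Ext A1) (s t u : instants (dh A0)) :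
  IsRealization A1 l x -> hle (dh A0) s t -> hle (dh A0) t u ->
  defined_at x (sync_instant sy s) -> defined_at x (sync_instant sy u) ->
  defined_at x (sync_instant sy t).
Proof.
  intros Hx Hst Htu Hs Hu.
  destruct (smono _ _ sy) as [Hincr | Hdecr].
  - exact (realization_defined_le A1 l x Hx _ _ (Hincr _ _ Htu) Hu).
  - exact (realization_defined_le A1 l x Hx _ _ (Hdecr _ _ Hst) Hs).
Qed.

Section Beta.
Context {I : Type} {A : I -> OpenDyn} (R : Interaction A) (i0 : I)
        (sy : forall j : {i : I | i <> i0}, Sync (A i0) (A (proj1_sig j))).

Lemma BetaPar_inhabited : inhabited (BetaPar R).
Proof.
  destruct (conf_ne _ _ R) as [sg [mu Hr]].
  exact (inhabits (exist _ mu (ex_intro _ sg Hr))).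
Qed.

Lemma BetaSt_ext S (a b : BetaSt i0 sy S) :
  fst (proj1_sig a) = fst (proj1_sig b) ->
  (forall j, snd (proj1_sig a) j = snd (proj1_sig b) j) -> a = b.
Proof.
  destruct a as [[a0 aj] Ha], b as [[b0 bj] Hb]; simpl; intros -> Hj.
  apply functional_extensionality_dep in Hj; subst bj.
  f_equal; apply proof_irrelevance.
Qed.

Lemma BetaTr_id_sub S (mu : BetaPar R) :
  Tsub (BetaTr R i0 sy S S (cid S) mu) (TId (BetaSt i0 sy S)).
Proof.
  intros a b [Htau [sg [_ [Pa0 [Pb0 Pj]]]]].
  rewrite hmap_id in Htau.
  assert (E0 : fst (proj1_sig a) = fst (proj1_sig b))
    by exact (passes_tau_inj _ _ _ _ _ Pa0 Pb0 (eq_sym Htau)).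
  apply BetaSt_ext; [exact E0|].
  intro j; destruct (Pj j) as [Pa Pb].
  apply (passes_tau_inj _ _ _ _ _ Pa Pb).
  rewrite (proj2_sig a j), (proj2_sig b j), E0; reflexivity.
Qed.

Lemma beta_state_of_realizations (sg : forall i, Ext (A i)) (mu : forall i, dL (A i))
  T (t : hob (dh (A i0)) T) :
  rb R sg mu ->
  defined_at (sg i0) (existT _ T t) ->
  (forall j, defined_at (sg (proj1_sig j)) (sync_instant (sy j) (existT _ T t))) ->
  exists b : BetaSt i0 sy T,
    dtau (A i0) T (fst (proj1_sig b)) = t /\
    Passes (A i0) (sg i0) T (fst (proj1_sig b)) /\
    forall j, Passes (A (proj1_sig j)) (sg (proj1_sig j)) _ (snd (proj1_sig b) j).
Proof.
  intros Hr [b0 Hb0] Hj.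
  pose proof (conf_ok _ _ R _ _ Hr) as Hsg.
  set (bj := fun j => proj1_sig (constructive_indefinite_description _ (Hj j))).
  assert (Hbj : forall j, sg (proj1_sig j) (sD (sy j) T) (sd (sy j) t) = Some (bj j))
    by (intro j; exact (proj2_sig (constructive_indefinite_description _ (Hj j)))).
  assert (Hb0t : dtau (A i0) T b0 = t) by exact (proj1 (proj1 (Hsg i0)) _ _ _ Hb0).
  assert (Hbt : forall j, dtau (A (proj1_sig j)) _ (bj j) = sd (sy j) (dtau (A i0) T b0)).
  { intro j; rewrite Hb0t; exact (proj1 (proj1 (Hsg (proj1_sig j))) _ _ _ (Hbj j)). }
  exists (exist _ (b0, bj) Hbt); simpl; split; [exact Hb0t|split].
  - exact (realization_passes _ _ _ (proj1 (Hsg i0)) _ _ _ Hb0).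
  - intro j; exact (realization_passes _ _ _ (proj1 (Hsg (proj1_sig j))) _ _ _ (Hbj j)).
Qed.

Lemma BetaTr_comp_sub S T U (f : Hom S T) (g : Hom T U) (mu : BetaPar R) :
  Tsub (BetaTr R i0 sy S U (ccomp g f) mu)
       (Tcomp (BetaTr R i0 sy T U g mu) (BetaTr R i0 sy S T f mu)).
Proof.
  intros [[a0 aj] Ha] [[c0 cj] Hc] [Htau [sg [Hr [Pa0 [Pc0 Pj]]]]]; simpl in *.
  pose proof (conf_ok _ _ R _ _ Hr) as Hsg.
  set (t := hmap (dh (A i0)) f (dtau (A i0) S a0)).
  rewrite hmap_comp in Htau; fold t in Htau.
  assert (Hst : hle (dh (A i0)) (existT _ S (dtau (A i0) S a0)) (existT _ T t))
    by (exists f; reflexivity).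
  assert (Htu : hle (dh (A i0)) (existT _ T t) (existT _ U (dtau (A i0) U c0)))
    by (exists g; symmetry; exact Htau).
  destruct (beta_state_of_realizations sg (proj1_sig mu) T t Hr) as [b [Hbt [Pb0 Pbj]]].
  - apply (realization_defined_le _ _ _ (proj1 (Hsg i0)) _ _ Htu).
    exists c0; exact Pc0.
  - intro j; destruct (Pj j) as [Pa Pc].
    apply (sync_realization_defined_between _ _ (sy j) _ _ _ _ _
             (proj1 (Hsg (proj1_sig j))) Hst Htu).
    + exists (aj j); simpl; rewrite <- Ha; exact Pa.
    + exists (cj j); simpl; rewrite <- Hc; exact Pc.
  - exists b; split; split.
    + exact Hbt.
    + exists sg; split; [exact Hr|split; [exact Pa0|split; [exact Pb0|]]].
      intro j; split; [apply Pj|apply Pbj].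
    + rewrite Hbt; exact Htau.
    + exists sg; split; [exact Hr|split; [exact Pb0|split; [exact Pc0|]]].
      intro j; split; [apply Pbj|apply Pj].
Qed.

End Beta.

Theorem mainTheorem3 (I : Type) (A : I -> OpenDyn)
  (Heff : forall i, Efficient (A i))
  (R : Interaction A) (i0 : I)
  (sy : forall j : {i : I | i <> i0}, Sync (A i0) (A (proj1_sig j))) :
  SubFunctorial (dC (A i0)) (BetaPar R) (BetaSt i0 sy) (BetaTr R i0 sy).
Proof.
  split; [exact (BetaPar_inhabited R)|split].
  - exact (BetaTr_id_sub R i0 sy).
  - exact (BetaTr_comp_sub R i0 sy).
Qed.
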